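(* Let $\beta\ge1$ and let $x,y\in\mathbb R^d\setminus\{0\}$. For $\gamma>0$ define $$\cos_{(\beta,\gamma)}(x,y)=\Big\langle\Big(\frac{x}{\|x\|_{\beta+\gamma}}\Big)^{\ominus\beta},\Big(\frac{y}{\|y\|_{\beta+\gamma}}\Big)^{\ominus\gamma}\Big\rangle .$$ Then (a) $\displaystyle\lim_{\gamma\to0}\cos_{(\beta,\gamma)}(x,y)=\Big\langle\Big(\frac{x}{\|x\|_\beta}\Big)^{\ominus\beta},\mathrm{sign}(y)\Big\rangle$, where $\mathrm{sign}(y)=(\mathrm{sign}(y_i))_{i=1}^d$; (b) $\displaystyle\lim_{\gamma\to\infty}\cos_{(\beta,\gamma)}(x,y)=\Big\langle\Big(\frac{x}{\|x\|_\infty}\Big)^{\ominus\beta},\frac{\mathrm{sign}_\infty(y)}{\|\mathrm{sign}_\infty(y)\|_1}\Big\rangle$, where the $i$-th component of $\mathrm{sign}_\infty(y)$ is $\mathrm{sign}(y_i)\,\mathbb I(|y_i|=\|y\|_\infty)$.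
   Context: $\langle\cdot,\cdot\rangle$ is the Euclidean inner product on $\mathbb R^d$; $\|x\|_r=(\sum_i|x_i|^r)^{1/r}$ and $\|x\|_\infty=\max_i|x_i|$. For a vector $v$ and $a>0$, $v^{\ominus a}$ is taken componentwise with $t^{\ominus a}=\mathrm{sign}(t)|t|^a$ and $\mathrm{sign}(0)=0$; $\mathbb I$ is the indicator function. *)

From HB Require Import structures.
From mathcomp Require Import all_boot all_order all_algebra.
From mathcomp Require Import all_classical all_reals all_analysis.
Set Implicit Arguments. Unset Strict Implicit. Unset Printing Implicit Defensive.
Import Order.TTheory GRing.Theory Num.Theory.
Import numFieldNormedType.Exports.
Local Open Scope ring_scope.

(* vectors of R^d are row vectors 'rV[R]_d, coordinate i is v ord0 i *)

Definition spow (R : realType) (a t : R) : R := Num.sg t * (`|t| `^ a).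

Definition vspow (R : realType) (d : nat) (a : R) (v : 'rV[R]_d) : 'rV[R]_d :=
  \row_i spow a (v ord0 i).

Definition lpnorm (R : realType) (d : nat) (r : R) (v : 'rV[R]_d) : R :=
  (\sum_i `|v ord0 i| `^ r) `^ r^-1.

Definition linfnorm (R : realType) (d : nat) (v : 'rV[R]_d) : R :=
  \big[Num.max/0]_i `|v ord0 i|.

Definition inner (R : realType) (d : nat) (u v : 'rV[R]_d) : R :=
  \sum_i u ord0 i * v ord0 i.

Definition vsign (R : realType) (d : nat) (v : 'rV[R]_d) : 'rV[R]_d :=
  \row_i Num.sg (v ord0 i).

Definition vsign_inf (R : realType) (d : nat) (v : 'rV[R]_d) : 'rV[R]_d :=
  \row_i (Num.sg (v ord0 i) * (`|v ord0 i| == linfnorm v)%:R).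

Definition cosbg (R : realType) (d : nat) (beta gamma : R) (x y : 'rV[R]_d) : R :=
  inner (vspow beta ((lpnorm (beta + gamma) x)^-1 *: x))
        (vspow gamma ((lpnorm (beta + gamma) y)^-1 *: y)).

From HB Require Import structures.
From mathcomp Require Import all_boot all_order all_algebra.
From mathcomp Require Import all_classical all_reals all_analysis.
Set Implicit Arguments. Unset Strict Implicit. Unset Printing Implicit Defensive.
Import Order.TTheory GRing.Theory Num.Theory.
Import numFieldNormedType.Exports.
Local Open Scope classical_set_scope.
Local Open Scope ring_scope.

(* Write M = ||v||_oo and a_i = |v_i| / M in [0,1] ([relmag]), with max_i a_i = 1,
   and S_v(r) = sum_i a_i^r >= 1 ([powsum]).  Then ||v||_r = M S_v(r)^(1/r), and
   with r = beta + gamma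
     cos_(beta,gamma)(x,y)
       = S_x(r)^(-beta/r) S_y(r)^(-gamma/r) < (x/||x||_oo)^(-)beta, (y/||y||_oo)^(-)gamma >.
   As gamma -> 0 the first factor tends to S_x(beta)^(-1), the second to 1 and
   sign(y_i) a_i^gamma to sign(y_i).  As gamma -> oo, S_v(r) tends to the number K_v
   of maximal coordinates ([num_argmax]), so the factors tend to 1 and K_y^(-1),
   while a_i^gamma tends to the indicator of a_i = 1. *)

Section powR_limits.
Context {R : realType} {T : Type} {F : set_system T} {FF : ProperFilter F}.

Lemma cvg_powR (f g : T -> R) (a e : R) : 0 < a ->
  f @ F --> a -> g @ F --> e -> (fun t => f t `^ g t) @ F --> a `^ e.
Proof.
move=> a0 fa ge.
have powRE : \forall t \near F, expR (g t * ln (f t)) = f t `^ g t.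
  by near=> t; rewrite /powR gt_eqF //; near: t; exact: (cvgr_gt a fa _ a0).
apply: cvg_trans (near_eq_cvg powRE) _; rewrite /powR gt_eqF //.
apply: (continuous_cvg _ (@continuous_expR R _)); apply: cvgM => //.
exact: (continuous_cvg _ (continuous_ln a0)).
Unshelve. all: by end_near.
Qed.

Lemma cvg_powRr (a : R) (g : T -> R) (e : R) : 0 <= a -> 0 < e ->
  g @ F --> e -> (fun t => a `^ g t) @ F --> a `^ e.
Proof.
rewrite le_eqVlt => /predU1P[<- e0 ge|a0 _ ge]; last exact: cvg_powR (cvg_cst _) ge.
rewrite powR0 ?gt_eqF //; apply: cvg_near_cst.
by near=> t; rewrite powR0 // gt_eqF //; near: t; exact: (cvgr_gt e ge _ e0).
Unshelve. all: by end_near.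
Qed.

Lemma cvg_powR_pinfty (a : R) (g : T -> R) : 0 <= a <= 1 ->
  g @ F --> +oo -> (fun t => a `^ g t) @ F --> ((a == 1)%:R : R).
Proof.
move=> /andP[a0 a1] goo; have [->|a_ne1] := eqVneq a 1.
  by rewrite powR1; exact: cvg_cst.
move: a0; rewrite le_eqVlt => /predU1P[<-|a0].
  apply: cvg_near_cst; move/cvgryPgt: goo => /(_ 0).
  by apply: filterS => t gt0; rewrite powR0 // gt_eqF.
have ln_a_lt0 : 0 < - ln a by rewrite oppr_gt0 ln_lt0 // a0 lt_neqAle a_ne1.
have -> : (fun t => a `^ g t) = (fun s => expR (- s)) \o (fun t => g t * - ln a).
  by apply/funext => t /=; rewrite /powR gt_eqF // mulrN opprK.
apply: cvg_comp (@cvgr_expR R); apply/cvgryPge => A.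
by move/cvgryPge: goo => /(_ (A / - ln a)); apply: filterS => t; rewrite ler_pdivrMr.
Qed.

End powR_limits.

Section sup_normalization.
Variables (R : realType) (d : nat).
Implicit Types (u v w : 'rV[R]_d) (a c r t : R).

Definition relmag v i := `|v ord0 i| / linfnorm v.
Definition powsum v r := \sum_i relmag v i `^ r.
Definition num_argmax v : R := \sum_i (relmag v i == 1)%:R.

Lemma linfnorm_ge0 v : 0 <= linfnorm v.
Proof. by rewrite /linfnorm; elim/big_ind: _ => // a b a0 b0; rewrite le_max a0. Qed.

Lemma norm_le_linfnorm v i : `|v ord0 i| <= linfnorm v.
Proof. exact: le_bigmax. Qed.

Lemma exists_coord_neq0 v : v != 0 -> exists i, v ord0 i != 0.
Proof.
move=> v0; apply/existsP; apply: contraNT v0 => /existsPn v0.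
by apply/eqP/rowP => i; rewrite mxE; apply/eqP/negPn/v0.
Qed.

Lemma linfnorm_gt0 v : v != 0 -> 0 < linfnorm v.
Proof.
move=> /exists_coord_neq0[i vi].
by apply: lt_le_trans (norm_le_linfnorm v i); rewrite normr_gt0.
Qed.

Lemma relmag_ge0 v i : 0 <= relmag v i.
Proof. by rewrite divr_ge0 ?linfnorm_ge0. Qed.

Lemma relmag_le1 v i : relmag v i <= 1.
Proof.
rewrite /relmag; have [->|M0] := eqVneq (linfnorm v) 0; first by rewrite invr0 mulr0.
have M_gt0 : 0 < linfnorm v by rewrite lt_neqAle eq_sym M0 linfnorm_ge0.
by rewrite ler_pdivrMr // mul1r norm_le_linfnorm.
Qed.

Lemma relmag_eq1 v i : v != 0 -> (relmag v i == 1) = (`|v ord0 i| == linfnorm v).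
Proof.
move=> /linfnorm_gt0; rewrite lt0r => /andP[M0 _].
by rewrite /relmag -[1](divff M0) (can_eq (divfK M0)).
Qed.

Lemma relmag_gt0 v i : v ord0 i != 0 -> 0 < relmag v i.
Proof.
move=> vi; have v0 : v != 0 by apply: contraNneq vi => ->; rewrite mxE.
by rewrite divr_gt0 ?normr_gt0 ?linfnorm_gt0.
Qed.

Lemma exists_relmag_eq1 v : v != 0 -> exists j, relmag v j = 1.
Proof.
move=> v0; have [i _] := exists_coord_neq0 v0.
have /(bigmax_eq_arg 0 i predT) : forall j, predT j -> 0 <= `|v ord0 j| by [].
move=> /(_ isT) M_max; exists [arg max_(j > i) `|v ord0 j|]%O.
by apply/eqP; rewrite relmag_eq1 // /linfnorm M_max.
Qed.

Lemma powsum_ge1 v r : v != 0 -> 1 <= powsum v r.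
Proof.
move=> /exists_relmag_eq1[j aj]; rewrite /powsum (bigD1 j) //= aj powR1 lerDl.
by apply: sumr_ge0 => i _; exact: powR_ge0.
Qed.

Lemma num_argmax_ge1 v : v != 0 -> 1 <= num_argmax v.
Proof.
move=> /exists_relmag_eq1[j aj]; rewrite /num_argmax (bigD1 j) //= aj eqxx lerDl.
by apply: sumr_ge0 => i _; exact: ler0n.
Qed.

Lemma lpnorm_linfnorm v r : v != 0 -> r != 0 ->
  lpnorm r v = linfnorm v * powsum v r `^ r^-1.
Proof.
move=> /linfnorm_gt0 M0 r0; rewrite /lpnorm /powsum.
have -> : \sum_i `|v ord0 i| `^ r = linfnorm v `^ r * \sum_i relmag v i `^ r.
  rewrite mulr_sumr; apply: eq_bigr => i _.
  by rewrite -powRM ?relmag_ge0 ?ltW // mulrC divfK ?gt_eqF.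
rewrite powRM ?powR_ge0 ?sumr_ge0 // => [|i _]; last exact: powR_ge0.
by rewrite -powRrM divff // powRr1 ?ltW.
Qed.

Lemma spowZ a c t : 0 < c -> spow a (c * t) = c `^ a * spow a t.
Proof.
move=> c0; rewrite /spow sgrM gtr0_sg // mul1r normrM gtr0_norm //.
by rewrite powRM ?normr_ge0 ?ltW // mulrCA.
Qed.

Lemma vspowZ a c v : 0 < c -> vspow a (c *: v) = c `^ a *: vspow a v.
Proof. by move=> c0; apply/rowP => i; rewrite !mxE spowZ. Qed.

Lemma vspow_linfnormE a v i :
  vspow a ((linfnorm v)^-1 *: v) ord0 i = Num.sg (v ord0 i) * relmag v i `^ a.
Proof.
have [vi0|vi] := eqVneq (v ord0 i) 0.
  by rewrite !mxE vi0 mulr0 /spow sgr0 !mul0r.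
have M0 : 0 < (linfnorm v)^-1.
  by rewrite invr_gt0 linfnorm_gt0 //; apply: contraNneq vi => ->; rewrite mxE.
rewrite vspowZ // !mxE /spow /relmag mulrCA -powRM ?normr_ge0 ?ltW //.
by rewrite [_^-1 * _]mulrC.
Qed.

Lemma vspow_lpnormalize a r v : v != 0 -> 0 < r ->
  vspow a ((lpnorm r v)^-1 *: v) =
  powsum v r `^ (- (a / r)) *: vspow a ((linfnorm v)^-1 *: v).
Proof.
move=> v0 r0; have S0 : 0 < powsum v r by apply: lt_le_trans (powsum_ge1 _ v0).
rewrite lpnorm_linfnorm ?gt_eqF // invfM mulrC -scalerA vspowZ ?invr_gt0 ?powR_gt0 //.
by rewrite -powRN -powRrM mulrC mulrN.
Qed.

Lemma innerZl c u w : inner (c *: u) w = c * inner u w.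
Proof. by rewrite /inner mulr_sumr; apply: eq_bigr => i _; rewrite mxE mulrA. Qed.

Lemma innerZr c u w : inner u (c *: w) = c * inner u w.
Proof. by rewrite /inner mulr_sumr; apply: eq_bigr => i _; rewrite mxE mulrCA. Qed.

Lemma lpnorm1_vsign_inf v : v != 0 -> lpnorm 1 (vsign_inf v) = num_argmax v.
Proof.
move=> v0; rewrite /lpnorm invr1 powRr1; last by apply: sumr_ge0 => i _; exact: powR_ge0.
apply: eq_bigr => i _; rewrite powRr1 // mxE -relmag_eq1 //.
have [ai|] := eqVneq (relmag v i) 1; last by rewrite mulr0 normr0.
rewrite mulr1 normr_sg; suff -> : v ord0 i != 0 by [].
apply/eqP => vi0; move: ai; rewrite /relmag vi0 normr0 mul0r => /eqP.
by rewrite eq_sym oner_eq0.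
Qed.

Lemma cosbgE beta gamma x y : x != 0 -> y != 0 -> 0 < beta + gamma ->
  cosbg beta gamma x y =
  powsum x (beta + gamma) `^ (- (beta / (beta + gamma))) *
  powsum y (beta + gamma) `^ (- (gamma / (beta + gamma))) *
  inner (vspow beta ((linfnorm x)^-1 *: x)) (vspow gamma ((linfnorm y)^-1 *: y)).
Proof. by move=> x0 y0 r0; rewrite /cosbg !vspow_lpnormalize // innerZl innerZr mulrA. Qed.

End sup_normalization.

Section sup_normalization_limits.
Variables (R : realType) (d : nat).
Context {T : Type} {F : set_system T} {FF : ProperFilter F}.
Implicit Types (u v : 'rV[R]_d).

Lemma cvg_inner_r u (w : T -> 'rV[R]_d) (l : 'rV[R]_d) :
  (forall i, (fun t => w t ord0 i) @ F --> l ord0 i) ->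
  (fun t => inner u (w t)) @ F --> inner u l.
Proof.
move=> wl; apply: cvg_big => [|i _]; first exact: add_continuous.
by apply: cvgM => //; exact: cvg_cst.
Qed.

Lemma cvg_powsum v (r : T -> R) (l : R) : 0 < l ->
  r @ F --> l -> (fun t => powsum v (r t)) @ F --> powsum v l.
Proof.
move=> l0 rl; apply: cvg_big => [|i _]; first exact: add_continuous.
exact: cvg_powRr (relmag_ge0 _ _) l0 rl.
Qed.

Lemma cvg_powsum_pinfty v (r : T -> R) :
  r @ F --> +oo -> (fun t => powsum v (r t)) @ F --> num_argmax v.
Proof.
move=> roo; apply: cvg_big => [|i _]; first exact: add_continuous.
by apply: cvg_powR_pinfty roo; rewrite relmag_ge0 relmag_le1.
Qed.

Lemma cvg_vspow_linfnorm_0 v (g : T -> R) i : g @ F --> 0 ->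
  (fun t => vspow (g t) ((linfnorm v)^-1 *: v) ord0 i) @ F --> vsign v ord0 i.
Proof.
move=> g0; under eq_fun do rewrite vspow_linfnormE; rewrite mxE.
have [vi0|vi] := eqVneq (v ord0 i) 0.
  by rewrite vi0 sgr0; under eq_fun do rewrite mul0r; exact: cvg_cst.
have pow1 : (fun t => relmag v i `^ g t) @ F --> (1 : R).
  by rewrite -(powRr0 (relmag v i)); exact: cvg_powR (relmag_gt0 vi) (cvg_cst _) g0.
by apply: cvg_trans (cvgM (cvg_cst _) pow1) _; rewrite mulr1.
Qed.

Lemma cvg_vspow_linfnorm_pinfty v (g : T -> R) i : g @ F --> +oo ->
  (fun t => vspow (g t) ((linfnorm v)^-1 *: v) ord0 i) @ F --> vsign_inf v ord0 i.
Proof.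
move=> goo; under eq_fun do rewrite vspow_linfnormE; rewrite mxE.
have [vi0|vi] := eqVneq (v ord0 i) 0.
  by rewrite vi0 sgr0 mul0r; under eq_fun do rewrite mul0r; exact: cvg_cst.
have v0 : v != 0 by apply: contraNneq vi => ->; rewrite mxE.
rewrite -relmag_eq1 //; apply: cvgM; first exact: cvg_cst.
by apply: cvg_powR_pinfty goo; rewrite relmag_ge0 relmag_le1.
Qed.

Lemma cvg_powsum_powR v (r e : T -> R) (l el : R) : v != 0 -> 0 < l ->
  r @ F --> l -> e @ F --> el ->
  (fun t => powsum v (r t) `^ (- (e t / r t))) @ F --> powsum v l `^ (- (el / l)).
Proof.
move=> v0 l0 rl eel; apply: cvg_powR.
- exact: lt_le_trans ltr01 (powsum_ge1 _ v0).
- exact: cvg_powsum l0 rl.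
- by apply: cvgN; apply: cvgM eel _; exact: cvgV (lt0r_neq0 l0) rl.
Qed.

Lemma cvg_powsum_powR_pinfty v (r e : T -> R) (el : R) : v != 0 ->
  r @ F --> +oo -> (fun t => e t / r t) @ F --> el ->
  (fun t => powsum v (r t) `^ (- (e t / r t))) @ F --> num_argmax v `^ (- el).
Proof.
move=> v0 roo eel; apply: cvg_powR (cvgN eel).
- exact: lt_le_trans ltr01 (num_argmax_ge1 v0).
- exact: cvg_powsum_pinfty roo.
Qed.

End sup_normalization_limits.

Section cosine_limits.
Variables (R : realType) (d : nat) (beta : R) (x y : 'rV[R]_d).
Hypotheses (beta_gt0 : 0 < beta) (x_neq0 : x != 0) (y_neq0 : y != 0).

Lemma cvg_cosbg_factored (G : set_system R) {PG : ProperFilter G} (l : R) :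
  (\forall g \near G, 0 < g) ->
  (fun g => powsum x (beta + g) `^ (- (beta / (beta + g))) *
            powsum y (beta + g) `^ (- (g / (beta + g))) *
            inner (vspow beta ((linfnorm x)^-1 *: x)) (vspow g ((linfnorm y)^-1 *: y)))
    @ G --> l ->
  (fun g => cosbg beta g x y) @ G --> l.
Proof.
move=> g_gt0; apply: cvg_trans; apply: near_eq_cvg.
by near=> g; rewrite cosbgE // addr_gt0 //; near: g.
Unshelve. all: by end_near.
Qed.

Lemma cvg_cosbg_0 : (fun gamma => cosbg beta gamma x y) @ (0:R)^'+ -->
  inner (vspow beta ((lpnorm beta x)^-1 *: x)) (vsign y).
Proof.
apply: cvg_cosbg_factored; first exact: nbhs_right_gt.
have id0 : (fun g : R => g) @ (0:R)^'+ --> (0:R) by exact/cvg_at_right_filter/cvg_id.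
have r_cvg : (fun g => beta + g) @ (0:R)^'+ --> beta.
  by apply: cvg_trans (cvgD (cvg_cst beta) id0) _; rewrite addr0.
have -> : inner (vspow beta ((lpnorm beta x)^-1 *: x)) (vsign y) =
    powsum x beta `^ (- (beta / beta)) * powsum y beta `^ (- (0 / beta)) *
    inner (vspow beta ((linfnorm x)^-1 *: x)) (vsign y).
  by rewrite vspow_lpnormalize // innerZl mul0r oppr0 powRr0 mulr1.
apply: cvgM; [apply: cvgM|].
- exact: cvg_powsum_powR x_neq0 beta_gt0 r_cvg (cvg_cst beta).
- exact: cvg_powsum_powR y_neq0 beta_gt0 r_cvg id0.
- by apply: cvg_inner_r => i; exact: cvg_vspow_linfnorm_0.
Qed.

Lemma cvg_cosbg_pinfty : (fun gamma => cosbg beta gamma x y) @ +oo -->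
  inner (vspow beta ((linfnorm x)^-1 *: x))
        ((lpnorm 1 (vsign_inf y))^-1 *: vsign_inf y).
Proof.
have g_gt0 : \forall g \near +oo, 0 < (g : R) by apply: nbhs_pinfty_gt; exact: num_real.
apply: cvg_cosbg_factored => //.
have r_pinfty : (fun g => beta + g) @ +oo --> +oo.
  apply/cvgryPge => A; near=> g; rewrite -lerBlDl; near: g.
  by apply: nbhs_pinfty_ge; exact: num_real.
have r_gt0 : \forall g \near +oo, 0 < beta + g.
  by near=> g; rewrite addr_gt0 //; near: g.
have ratio_beta : (fun g => beta / (beta + g)) @ +oo --> (0 : R).
  apply: cvg_trans (cvgM (cvg_cst beta) ((gtr0_cvgV0 r_gt0).2 r_pinfty)) _.
  by rewrite mulr0.
have ratio_gamma : (fun g => g / (beta + g)) @ +oo --> (1 : R).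
  have ratioE : \forall g \near +oo, 1 - beta / (beta + g) = g / (beta + g).
    near=> g; have /lt0r_neq0 r_neq0 : 0 < beta + g by near: g.
    by rewrite -[X in X - _](divff r_neq0) -mulrBl [beta + g]addrC addrK.
  apply: cvg_trans (near_eq_cvg ratioE) _.
  by apply: cvg_trans (cvgB (cvg_cst (1 : R)) ratio_beta) _; rewrite subr0.
have -> : inner (vspow beta ((linfnorm x)^-1 *: x))
    ((lpnorm 1 (vsign_inf y))^-1 *: vsign_inf y) =
    num_argmax x `^ (- 0) * num_argmax y `^ (- 1) *
    inner (vspow beta ((linfnorm x)^-1 *: x)) (vsign_inf y).
  rewrite innerZr lpnorm1_vsign_inf // oppr0 powRr0 mul1r powR_inv1 //.
  exact: le_trans ler01 (num_argmax_ge1 y_neq0).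
apply: cvgM; [apply: cvgM|].
- exact: cvg_powsum_powR_pinfty x_neq0 r_pinfty ratio_beta.
- exact: cvg_powsum_powR_pinfty y_neq0 r_pinfty ratio_gamma.
- by apply: cvg_inner_r => i; apply: cvg_vspow_linfnorm_pinfty.
Unshelve. all: by end_near.
Qed.

End cosine_limits.

Theorem mainTheorem12 (R : realType) (d : nat) (beta : R) (x y : 'rV[R]_d) :
  1 <= beta -> x != 0 -> y != 0 ->
  ((fun gamma => cosbg beta gamma x y) @ (0:R)^'+ -->
     inner (vspow beta ((lpnorm beta x)^-1 *: x)) (vsign y))
  /\
  ((fun gamma => cosbg beta gamma x y) @ +oo%R -->
     inner (vspow beta ((linfnorm x)^-1 *: x))
           ((lpnorm 1 (vsign_inf y))^-1 *: vsign_inf y)).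
Proof.
move=> beta_ge1 x_neq0 y_neq0.
have beta_gt0 : 0 < beta by exact: lt_le_trans ltr01 beta_ge1.
by split; [exact: cvg_cosbg_0 | exact: cvg_cosbg_pinfty].
Qed.
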